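(* For all $r \in \mathbb{R}^3 \setminus \{0\}$ and all $f_* \in \mathbb{R}^3$, $$f\big(r, c_1(r,f_* ), c_2(r,f_* )\big) = f_*,$$ where $f$, $c_1$, $c_2$ are the functions defined in the context below.
   Context: Notation: $\|\cdot\|$ is the Euclidean norm. For $a=(a_1,a_2,a_3)^{\mathrm T}\in\mathbb{R}^3$, $[a]_\times$ is the skew-symmetric matrix with rows $(0,-a_3,a_2)$, $(a_3,0,-a_1)$, $(-a_2,a_1,0)$, so $[a]_\times b = a\times b$. $\operatorname{sgn}:\mathbb{R}\to\{-1,0,1\}$ is the sign function with $\operatorname{sgn}(0)=0$. Force function: for $r\in\mathbb{R}^3\setminus\{0\}$ and $p,q\in\mathbb{R}^3$, $$f(r,p,q) \triangleq \frac{q^{\mathrm T} r}{\|r\|}\,p + \frac{p^{\mathrm T} r}{\|r\|}\,q + \frac{p^{\mathrm T} q}{\|r\|}\,r - 5\,\frac{(p^{\mathrm T} r)(q^{\mathrm T} r)}{\|r\|^3}\,r.$$ Rotation-like matrix: $R(r,f_* )\in\mathbb{R}^{3\times 3}$ is defined as follows. If $[r]_\times f_*\neq 0$, then $R(r,f_* )$ is the matrix whose three rows are (the transposes of) the column vectors $$\frac{r}{\|r\|},\qquad \frac{(r^{\mathrm T} r) f_* - (r^{\mathrm T} f_* )\, r}{\|r\|\,\|[r]_\times f_*\|},\qquad \frac{[r]_\times f_*}{\|[r]_\times f_*\|};$$ if $[r]_\times f_* = 0$, then $R(r,f_* )$ is the matrix whose first row is $r^{\mathrm T}/\|r\|$ and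 whose second and third rows are zero. Auxiliary scalars: $$\Phi_1(r,f_* ) \triangleq \sqrt{\|[r]_\times f_*\|^2 + \|r\|^2\|f_*\|^2},\qquad \Phi_2(r,f_* ) \triangleq \big(2-\operatorname{sgn}(r^{\mathrm T} f_* )^2\big)\,\Phi_1(r,f_* ),$$ $$a_x \triangleq -\frac{\operatorname{sgn}(r^{\mathrm T} f_* )}{2}\Big(\frac{|r^{\mathrm T} f_*| + \Phi_1}{\|r\|}\Big)^{1/2},\qquad a_y \triangleq \frac{1}{\sqrt2}\Big(\frac{-|r^{\mathrm T} f_*| + \Phi_2}{\|r\|}\Big)^{1/2},$$ $$b_x \triangleq \frac{1}{2}\Big(\frac{|r^{\mathrm T} f_*| + \Phi_2}{\|r\|}\Big)^{1/2},\qquad b_y \triangleq -\frac{\operatorname{sgn}(r^{\mathrm T} f_* )}{\sqrt2}\Big(\frac{-|r^{\mathrm T} f_*| + \Phi_1}{\|r\|}\Big)^{1/2},$$ all evaluated at $(r,f_* )$. Let $a(r,f_* ) \triangleq (a_x, a_y, 0)^{\mathrm T}$ and $b(r,f_* ) \triangleq (b_x,b_y,0)^{\mathrm T}$. Finally $$c_1(r,f_* ) \triangleq R(r,f_* )^{\mathrm T} a(r,f_* ),\qquad c_2(r,f_* ) \triangleq R(r,f_* )^{\mathrm T} b(r,f_* ).$$ *)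

From HB Require Import structures.
From mathcomp Require Import all_boot all_order all_algebra.
From mathcomp Require Import reals.
Set Implicit Arguments. Unset Strict Implicit. Unset Printing Implicit Defensive.
Import Order.TTheory GRing.Theory Num.Theory.
Local Open Scope ring_scope.

Section Defs.
Variable R : realType.
Implicit Types (a b p q r fs : 'cV[R]_3).

Definition comp a (k : nat) : R := a (@inord 2 k) 0.

Definition dot p q : R := (p^T *m q) 0 0.
Definition vnorm a : R := Num.sqrt (dot a a).

(* [a]_x : rows (0,-a3,a2), (a3,0,-a1), (-a2,a1,0) *)
Definition skew a : 'M[R]_3 :=
  \matrix_(i < 3, j < 3)
    (if (i : nat) == 0%N then
       (if (j : nat) == 0%N then 0 else if (j : nat) == 1%N then - comp a 2 else comp a 1)
     else if (i : nat) == 1%N then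
       (if (j : nat) == 0%N then comp a 2 else if (j : nat) == 1%N then 0 else - comp a 0)
     else
       (if (j : nat) == 0%N then - comp a 1 else if (j : nat) == 1%N then comp a 0 else 0)).

Definition force r p q : 'cV[R]_3 :=
  (dot q r / vnorm r) *: p + (dot p r / vnorm r) *: q + (dot p q / vnorm r) *: r
  - (5 * (dot p r * dot q r) / vnorm r ^+ 3) *: r.

Definition rows3 (u v w : 'cV[R]_3) : 'M[R]_3 :=
  \matrix_(i < 3, j < 3)
    (if (i : nat) == 0%N then u j 0 else if (i : nat) == 1%N then v j 0 else w j 0).

Definition Rmat r fs : 'M[R]_3 :=
  let c := skew r *m fs in
  if c != 0 then
    rows3 ((vnorm r)^-1 *: r)
          ((vnorm r * vnorm c)^-1 *: (dot r r *: fs - dot r fs *: r))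
          ((vnorm c)^-1 *: c)
  else rows3 ((vnorm r)^-1 *: r) 0 0.

Definition Phi1 r fs : R :=
  Num.sqrt (vnorm (skew r *m fs) ^+ 2 + vnorm r ^+ 2 * vnorm fs ^+ 2).
Definition Phi2 r fs : R := (2 - Num.sg (dot r fs) ^+ 2) * Phi1 r fs.

(* x^(1/2) is Num.sqrt x (all arguments below are nonnegative) *)
Definition a_x r fs : R :=
  - (Num.sg (dot r fs) / 2) * Num.sqrt ((`|dot r fs| + Phi1 r fs) / vnorm r).
Definition a_y r fs : R :=
  (Num.sqrt 2)^-1 * Num.sqrt ((- `|dot r fs| + Phi2 r fs) / vnorm r).
Definition b_x r fs : R :=
  2^-1 * Num.sqrt ((`|dot r fs| + Phi2 r fs) / vnorm r).
Definition b_y r fs : R :=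
  - (Num.sg (dot r fs) / Num.sqrt 2) * Num.sqrt ((- `|dot r fs| + Phi1 r fs) / vnorm r).

Definition vec3 (x y z : R) : 'cV[R]_3 :=
  \col_(i < 3) (if (i : nat) == 0%N then x else if (i : nat) == 1%N then y else z).

Definition avec r fs : 'cV[R]_3 := vec3 (a_x r fs) (a_y r fs) 0.
Definition bvec r fs : 'cV[R]_3 := vec3 (b_x r fs) (b_y r fs) 0.

Definition c1 r fs : 'cV[R]_3 := (Rmat r fs)^T *m avec r fs.
Definition c2 r fs : 'cV[R]_3 := (Rmat r fs)^T *m bvec r fs.

End Defs.

(* The rows of [Rmat r fs] are an orthonormal frame (e, n, r x fs / |r x fs|)
   with e = r / |r| and n a unit vector in the plane of r and fs, so c1 and c2
   lie in span(e, n).  For p = x1 e + y1 n and q = x2 e + y2 n with n orthogonal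
   to r, the force is ((y1 y2 - 2 x1 x2) / |r|) r + (x2 y1 + x1 y2) n, whereas
   fs = (r.fs / |r|^2) r + (|r x fs| / |r|) n.  It therefore suffices that
   a_y b_y - 2 a_x b_x = r.fs / |r| and b_x a_y + a_x b_y = |r x fs| / |r|,
   which follows from Phi1^2 = 2 |r x fs|^2 + (r.fs)^2 (Lagrange's identity)
   after splitting on whether r.fs vanishes. *)

From Pilot Require Import Defs.
From mathcomp Require Import all_boot all_order all_algebra.
From mathcomp Require Import reals ring lra.
Set Implicit Arguments. Unset Strict Implicit. Unset Printing Implicit Defensive.
Import Order.TTheory GRing.Theory Num.Theory.
Local Open Scope ring_scope.

Section Force.
Variable R : realType.
Implicit Types (p q v w r fs : 'cV[R]_3) (x y : R).

Lemma lift0_1 : lift ord0 ord0 = 1 :> 'I_3. Proof. exact: val_inj. Qed.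
Lemma lift0_2 : lift ord0 (lift ord0 ord0) = 2%:R :> 'I_3. Proof. exact: val_inj. Qed.

Lemma comp0 p : Defs.comp p 0 = p 0 0.
Proof. by congr (p _ _); apply/val_inj; rewrite /= inordK. Qed.
Lemma comp1 p : Defs.comp p 1 = p 1 0.
Proof. by congr (p _ _); apply/val_inj; rewrite /= inordK. Qed.
Lemma comp2 p : Defs.comp p 2 = p 2%:R 0.
Proof. by congr (p _ _); apply/val_inj; rewrite /= inordK. Qed.

Lemma dotE p q : dot p q = \sum_i p i 0 * q i 0.
Proof. by rewrite /dot mxE; apply: eq_bigr => i _; rewrite mxE. Qed.

Lemma dot3 p q : dot p q = p 0 0 * q 0 0 + p 1 0 * q 1 0 + p 2%:R 0 * q 2%:R 0.
Proof. by rewrite dotE !big_ord_recl big_ord0 addr0 addrA lift0_1 lift0_2. Qed.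

Lemma dotC p q : dot p q = dot q p.
Proof. by rewrite !dotE; apply: eq_bigr => i _; rewrite mulrC. Qed.

Lemma dotDl p q w : dot (p + q) w = dot p w + dot q w.
Proof. by rewrite !dotE -big_split; apply: eq_bigr => i _; rewrite mxE mulrDl. Qed.

Lemma dotNl p q : dot (- p) q = - dot p q.
Proof. by rewrite !dotE -sumrN; apply: eq_bigr => i _; rewrite mxE mulNr. Qed.

Lemma dotZl x p q : dot (x *: p) q = x * dot p q.
Proof. by rewrite !dotE mulr_sumr; apply: eq_bigr => i _; rewrite mxE mulrA. Qed.

Lemma dot0l p : dot 0 p = 0.
Proof. by rewrite -(scale0r 0) dotZl mul0r. Qed.

Lemma dotBl p q w : dot (p - q) w = dot p w - dot q w.
Proof. by rewrite dotDl dotNl. Qed.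

Lemma dotDr p q w : dot w (p + q) = dot w p + dot w q.
Proof. by rewrite dotC dotDl !(dotC w). Qed.

Lemma dotZr x p q : dot p (x *: q) = x * dot p q.
Proof. by rewrite dotC dotZl dotC. Qed.

Lemma dotBr p q w : dot w (p - q) = dot w p - dot w q.
Proof. by rewrite dotC dotBl !(dotC w). Qed.

Lemma dot_ge0 p : 0 <= dot p p.
Proof. by rewrite dotE sumr_ge0 // => i _; rewrite -expr2 sqr_ge0. Qed.

Lemma dot_eq0 p : (dot p p == 0) = (p == 0).
Proof.
apply/idP/eqP => [|->]; last by rewrite dotE big1 // => i _; rewrite mxE mul0r.
rewrite dotE => /eqP /psumr_eq0P sq0; apply/matrixP => i j.
rewrite (ord1 j) mxE; apply/eqP; rewrite -sqrf_eq0 expr2 sq0 // => k _.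
by rewrite -expr2 sqr_ge0.
Qed.

Lemma vnorm_sq p : vnorm p ^+ 2 = dot p p.
Proof. exact/sqr_sqrtr/dot_ge0. Qed.

Lemma vnorm_ge0 p : 0 <= vnorm p.
Proof. exact: sqrtr_ge0. Qed.

Lemma vnorm_eq0 p : (vnorm p == 0) = (p == 0).
Proof. by rewrite sqrtr_eq0 le_eqVlt ltNge dot_ge0 orbF dot_eq0. Qed.

Lemma vnorm0 : vnorm 0 = 0 :> R.
Proof. by apply/eqP; rewrite vnorm_eq0. Qed.

Lemma vnorm_gt0 p : p != 0 -> 0 < vnorm p.
Proof. by move=> p0; rewrite lt_neqAle eq_sym vnorm_eq0 p0 vnorm_ge0. Qed.

Lemma dot_skew_mul r fs :
  dot (Defs.skew r *m fs) (Defs.skew r *m fs) = dot r r * dot fs fs - dot r fs ^+ 2.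
Proof.
rewrite !dot3 !mxE !big_ord_recl !big_ord0 !mxE /= comp0 comp1 comp2 lift0_1 lift0_2.
ring.
Qed.

Lemma dot_orth_part r fs :
  dot (dot r r *: fs - dot r fs *: r) (dot r r *: fs - dot r fs *: r)
  = dot r r * vnorm (Defs.skew r *m fs) ^+ 2.
Proof.
rewrite vnorm_sq dot_skew_mul !dotBl !dotBr !dotZl !dotZr (dotC fs r); ring.
Qed.

Lemma trmx_rows3_mul p q w x y : (rows3 p q w)^T *m vec3 x y 0 = x *: p + y *: q.
Proof.
apply/matrixP => i j; rewrite (ord1 j) !mxE !big_ord_recl big_ord0 !mxE /=; ring.
Qed.

Definition perp_dir r fs : 'cV[R]_3 :=
  let c := Defs.skew r *m fs in
  if c != 0 then (vnorm r * vnorm c)^-1 *: (dot r r *: fs - dot r fs *: r) else 0.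

Lemma trmx_Rmat_mul r fs x y :
  (Rmat r fs)^T *m vec3 x y 0 = x *: ((vnorm r)^-1 *: r) + y *: perp_dir r fs.
Proof. by rewrite /Rmat /perp_dir; case: ifP; rewrite trmx_rows3_mul. Qed.

Lemma perp_dir_orth r fs : dot (perp_dir r fs) r = 0.
Proof.
rewrite /perp_dir; case: ifP => _; last exact: dot0l.
by rewrite dotZl dotBl !dotZl (dotC fs) [X in _ - X]mulrC subrr mulr0.
Qed.

Lemma force_frame r v x1 y1 x2 y2 : r != 0 -> dot v r = 0 ->
  let e := (vnorm r)^-1 *: r in
  force r (x1 *: e + y1 *: v) (x2 *: e + y2 *: v)
  = ((y1 * y2 * dot v v - 2 * x1 * x2) / vnorm r) *: r + (x2 * y1 + x1 * y2) *: v.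
Proof.
move=> r0 vr e; have rho0 : vnorm r != 0 by rewrite vnorm_eq0.
have er : dot e r = vnorm r by rewrite dotZl -vnorm_sq; field.
have ve : dot v e = 0 by rewrite dotZr vr mulr0.
have ee : dot e e = 1 by rewrite dotZr er mulVf.
have eE : e = (vnorm r)^-1 *: r by []; clearbody e.
rewrite /force !dotDl !dotDr !dotZl !dotZr er vr ee ve (dotC e v) ve.
by apply/matrixP => i j; rewrite !mxE eE !mxE; field.
Qed.

Section Frame.
Variables r fs : 'cV[R]_3.
Hypothesis r0 : r != 0.
Let c := Defs.skew r *m fs.
Let rho_neq0 : vnorm r != 0. Proof. by rewrite vnorm_eq0. Qed.

Lemma scale_perp_dir :
  (vnorm r * vnorm c) *: perp_dir r fs = dot r r *: fs - dot r fs *: r.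
Proof.
rewrite /perp_dir -/c; case: ifPn => [c0|/negPn/eqP c0].
  by rewrite scalerA mulfV ?scale1r // mulf_neq0 // vnorm_eq0.
rewrite scaler0; apply/esym/eqP.
by rewrite -dot_eq0 dot_orth_part -/c c0 vnorm0 expr0n mulr0.
Qed.

Lemma perp_dir_unit : c != 0 -> dot (perp_dir r fs) (perp_dir r fs) = 1.
Proof.
move=> c0; have k0 : vnorm r * vnorm c != 0 by rewrite mulf_neq0 // vnorm_eq0.
have := congr1 (fun u => dot u u) scale_perp_dir.
rewrite dotZl dotZr dot_orth_part -/c => h.
by apply: (mulfI k0); apply: (mulfI k0); rewrite h -vnorm_sq; ring.
Qed.

Lemma frame_decomp :
  fs = (dot r fs / vnorm r ^+ 2) *: r + (vnorm c / vnorm r) *: perp_dir r fs.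
Proof.
apply/matrixP => i j; have := congr1 (fun m : 'cV[R]_3 => m i j) scale_perp_dir.
rewrite !mxE -vnorm_sq => h.
transitivity ((dot r fs * r i j + vnorm r * vnorm c * perp_dir r fs i j) / vnorm r ^+ 2).
  by rewrite h; field.
by field.
Qed.
End Frame.

Lemma Phi1_sq r fs :
  Phi1 r fs ^+ 2 = 2 * vnorm (Defs.skew r *m fs) ^+ 2 + dot r fs ^+ 2.
Proof.
rewrite sqr_sqrtr; last by rewrite addr_ge0 ?sqr_ge0 // mulr_ge0 ?sqr_ge0.
by rewrite !vnorm_sq dot_skew_mul; ring.
Qed.

Lemma norm_dot_le_Phi1 r fs : `|dot r fs| <= Phi1 r fs.
Proof.
rewrite -ler_sqr ?nnegrE ?normr_ge0 ?sqrtr_ge0 // Phi1_sq real_normK ?num_real //.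
by rewrite lerDr mulr_ge0 ?sqr_ge0.
Qed.

Lemma coef_radial r fs : r != 0 ->
  a_y r fs * b_y r fs - 2 * a_x r fs * b_x r fs = dot r fs / vnorm r.
Proof.
move=> /vnorm_gt0; have := norm_dot_le_Phi1 r fs.
rewrite /a_x /a_y /b_x /b_y /Phi2.
move: (dot r fs) (Phi1 r fs) (vnorm r) => s F rho sF rho0.
have [->|s0] := eqVneq s 0; first by rewrite sgr0 !(mul0r, oppr0, mulr0, subr0).
have s2_gt0 : 0 < Num.sqrt 2 :> R by rewrite sqrtr_gt0 ltr0n.
have s2_sq : Num.sqrt 2 ^+ 2 = 2 :> R by rewrite sqr_sqrtr ?ler0n.
have -> : (2 - Num.sg s ^+ 2) * F = F by rewrite sqr_sg s0 mulr1n; ring.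
have u_sq : Num.sqrt ((`|s| + F) / rho) ^+ 2 = (`|s| + F) / rho.
  by rewrite sqr_sqrtr // divr_ge0 ?(ltW rho0) //; have := normr_ge0 s; lra.
have w_sq : Num.sqrt ((- `|s| + F) / rho) ^+ 2 = (- `|s| + F) / rho.
  by rewrite sqr_sqrtr // divr_ge0 ?(ltW rho0) //; have := normr_ge0 s; lra.
transitivity (Num.sg s / 2 * (Num.sqrt ((`|s| + F) / rho) ^+ 2)
  - Num.sg s / Num.sqrt 2 ^+ 2 * Num.sqrt ((- `|s| + F) / rho) ^+ 2).
  by field; rewrite gt_eqF.
by rewrite s2_sq u_sq w_sq -[s in RHS]mulr_sg_norm; field; rewrite gt_eqF.
Qed.

Lemma coef_perp r fs : r != 0 ->
  b_x r fs * a_y r fs + a_x r fs * b_y r fs = vnorm (Defs.skew r *m fs) / vnorm r.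
Proof.
move=> /vnorm_gt0; have := norm_dot_le_Phi1 r fs; have := Phi1_sq r fs.
have : 0 <= Phi1 r fs := sqrtr_ge0 _; have := vnorm_ge0 (Defs.skew r *m fs).
rewrite /a_x /a_y /b_x /b_y /Phi2.
move: (dot r fs) (Phi1 r fs) (vnorm r) (vnorm _) => s F rho C C0 F0 hF sF rho0.
have s2_gt0 : 0 < Num.sqrt 2 :> R by rewrite sqrtr_gt0 ltr0n.
have s2_sq : Num.sqrt 2 ^+ 2 = 2 :> R by rewrite sqr_sqrtr ?ler0n.
have [s0|s0] := eqVneq s 0.
  have FC : F = Num.sqrt 2 * C.
    rewrite -[F]ger0_norm // -sqrtr_sqr hF s0 expr0n addr0.
    by rewrite sqrtrM ?ler0n // sqrtr_sqr ger0_norm.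
  rewrite s0 sgr0 normr0.
  have -> : - 0 + (2 - 0 ^+ 2) * F = 2 * F by ring.
  have -> : 0 + (2 - 0 ^+ 2) * F = 2 * F by ring.
  have v_sq : Num.sqrt (2 * F / rho) ^+ 2 = 2 * F / rho.
    by rewrite sqr_sqrtr // divr_ge0 ?mulr_ge0 ?ler0n ?(ltW rho0).
  transitivity (Num.sqrt (2 * F / rho) ^+ 2 / (2 * Num.sqrt 2)).
    by field; rewrite gt_eqF.
  by rewrite v_sq FC; field; rewrite !gt_eqF.
have -> : (2 - Num.sg s ^+ 2) * F = F by rewrite sqr_sg s0 mulr1n; ring.
have uw : Num.sqrt ((`|s| + F) / rho) * Num.sqrt ((- `|s| + F) / rho)
          = Num.sqrt 2 * C / rho.
  rewrite -sqrtrM; last by rewrite divr_ge0 ?(ltW rho0) ?addr_ge0.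
  transitivity (Num.sqrt ((F ^+ 2 - `|s| ^+ 2) / rho ^+ 2)).
    by congr Num.sqrt; field; rewrite gt_eqF.
  rewrite real_normK ?num_real // hF addrK.
  have -> : 2 * C ^+ 2 = (Num.sqrt 2 * C) ^+ 2 by rewrite exprMn s2_sq.
  rewrite -expr_div_n sqrtr_sqr ger0_norm //.
  by rewrite divr_ge0 ?mulr_ge0 ?(ltW rho0) ?(ltW s2_gt0).
transitivity ((1 + Num.sg s ^+ 2) / (2 * Num.sqrt 2) *
  (Num.sqrt ((`|s| + F) / rho) * Num.sqrt ((- `|s| + F) / rho))).
  by field; rewrite gt_eqF.
by rewrite uw sqr_sg s0 mulr1n; field; rewrite !gt_eqF.
Qed.

Lemma b_y_eq0 r fs : Defs.skew r *m fs = 0 -> b_y r fs = 0.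
Proof.
move=> c0; have := Phi1_sq r fs; rewrite c0 vnorm0 expr0n mulr0 add0r => hF.
rewrite /b_y; have -> : Phi1 r fs = `|dot r fs|.
  by rewrite -[Phi1 r fs]ger0_norm ?sqrtr_ge0 // -sqrtr_sqr hF sqrtr_sqr.
by rewrite addNr mul0r sqrtr0 mulr0.
Qed.
End Force.

Theorem proposition2 (R : realType) (r fs : 'cV[R]_3) :
  r != 0 -> force r (c1 r fs) (c2 r fs) = fs.
Proof.
move=> r0; rewrite /c1 /c2 !trmx_Rmat_mul force_frame ?perp_dir_orth //.
have -> : a_y r fs * b_y r fs * dot (perp_dir r fs) (perp_dir r fs)
          = a_y r fs * b_y r fs.
  have [c0|c0] := eqVneq (Defs.skew r *m fs) 0.
    (* degenerate frame: perp_dir vanishes, but so does b_y *)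
    by rewrite b_y_eq0 // !mulr0 mul0r.
  by rewrite perp_dir_unit ?mulr1.
rewrite coef_radial // coef_perp // [RHS](frame_decomp fs r0).
by rewrite -mulrA -invfM -expr2.
Qed.
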